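(* Let $G$ be a graph, $in\colon\mathrm{dom}(G)\to D$ an inflow on $G$, and $G_1\subseteq G$ (i.e. $G=G_1\uplus G_2$ for some $G_2$). If $in_1=\mathrm{proj}(in,G)(G_1)$, then $\mathrm{flow}(in,G)|_{\mathrm{dom}(G_1)}=\mathrm{flow}(in_1,G_1)$.
   Context: Fix a flow domain $(D,\sqsubseteq,\sqcup,+,\cdot,0,1)$: a positive partially ordered $\omega$-complete semiring, i.e. $(D,\sqsubseteq)$ is an $\omega$-cpo with join $\sqcup$, $(D,+,\cdot,0,1)$ is a semiring, $+$ and $\cdot$ are continuous (preserve suprema of increasing chains), and $0$ is the least element. Fix a node label join-semilattice $(A,\sqsubseteq,\sqcup,a_e)$. A graph $G=(N,N^o,\lambda,\varepsilon)$ has a finite node set $N=\mathrm{dom}(G)$, a finite set of sinks $N^o$ disjoint from $N$, labels $\lambda\colon N\to A$, and edge function $\varepsilon\colon N\times(N\cup N^o)\to D$. The disjoint union $G_1\uplus G_2$ is defined iff $N_1\cap N_2=\emptyset$, and then equals $(N_1\cup N_2,(N_1^o\setminus N_2)\cup(N_2^o\setminus N_1),\lambda_1\uplus\lambda_2,\varepsilon')$ with $\varepsilon'(n_1,n_2)=\varepsilon_i(n_1,n_2)$ if $n_1\in N_i$ and $n_2\in N_i\cup N_i^o$ ($i=1,2$), and $0$ otherwise. $G_1\subseteq G$ iff $G=G_1\uplus G_2$ for some $G_2$. The capacity $\mathrm{cap}(G)$ is the least fixpoint of $\mathrm{cap}(G)(n,n')=\delta(n,n')+\sum_{n''\in N}\varepsilon(n,n'')\cdot\mathrm{cap}(G)(n'',n')$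 ($\delta(n,n')=1$ if $n=n'$, else $0$); the flow of an inflow $in\colon N\to D$ is $\mathrm{flow}(in,G)(n)=\sum_{n'\in N}in(n')\cdot\mathrm{cap}(G)(n',n)$ for $n\in N$. For $G=G_1\uplus G_2$ with edge function $\varepsilon$, the projection of $in$ onto $G_1$ is $\mathrm{proj}(in,G)(G_1)\colon\mathrm{dom}(G_1)\to D$, $\mathrm{proj}(in,G)(G_1)(n)=in(n)+\sum_{n'\in\mathrm{dom}(G)\setminus\mathrm{dom}(G_1)}\mathrm{flow}(in,G)(n')\cdot\varepsilon(n',n)$. *)

From HB Require Import structures.
From mathcomp Require Import all_boot all_order all_algebra.
Set Implicit Arguments. Unset Strict Implicit. Unset Printing Implicit Defensive.
Import GRing.Theory.
Local Open Scope ring_scope.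

(* D carries a semiring (D,+,*,0,1) (mathcomp pzSemiRingType), an order
   [le], and the supremum [sup] of increasing omega-chains (the join of
   the omega-cpo). *)

Definition increasing (D : Type) (le : D -> D -> Prop) (c : nat -> D) :=
  forall k, le (c k) (c k.+1).

Record flow_domain (D : pzSemiRingType) (le : D -> D -> Prop)
    (sup : (nat -> D) -> D) : Prop := FlowDomain {
  fd_refl : forall x, le x x;
  fd_trans : forall x y z, le x y -> le y z -> le x z;
  fd_antisym : forall x y, le x y -> le y x -> x = y;
  fd_sup_ub : forall c, increasing le c -> forall k, le (c k) (sup c);
  fd_sup_least : forall c, increasing le c ->
      forall u, (forall k, le (c k) u) -> le (sup c) u;
  fd_zero_least : forall x, le 0 x;
  fd_add_mono : forall x x' y y', le x x' -> le y y' -> le (x + y) (x' + y');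
  fd_mul_mono : forall x x' y y', le x x' -> le y y' -> le (x * y) (x' * y');
  fd_add_cont : forall c d, increasing le c -> increasing le d ->
      sup (fun k => c k + d k) = sup c + sup d;
  fd_mul_cont : forall c d, increasing le c -> increasing le d ->
      sup (fun k => c k * d k) = sup c * sup d
}.

(* Nodes are drawn from a universe V (an eqType); finite node sets are
   represented by sequences without duplicates.
   The functions lab/edge are total on V but only their values on
   N (resp. N x (N u N^o)) are meaningful. *)

Record graph (V : eqType) (A : Type) (D : pzSemiRingType) := Graph {
  gN : seq V;
  gNo : seq V;           (* sinks N^o *)
  glab : V -> A;
  gedge : V -> V -> D
}.

Section Graphs.
Variables (V : eqType) (A : Type) (D : pzSemiRingType).
Implicit Types (G : graph V A D).

Definition wf_graph G : Prop :=
  [/\ uniq (gN G), uniq (gNo G) & forall n, n \in gN G -> n \notin gNo G].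

(* [disj_union G G1 G2] : G = G1 (+) G2 (disjoint union, defined iff the
   node sets are disjoint), with equality of graphs meaning equal node
   sets, equal sink sets, and equal label/edge functions on their domains. *)
Definition disj_union G G1 G2 : Prop :=
  [/\ (forall n, n \in gN G1 -> n \notin gN G2),
      (forall n, (n \in gN G) = (n \in gN G1) || (n \in gN G2)),
      (forall n, (n \in gNo G) =
          ((n \in gNo G1) && (n \notin gN G2)) ||
          ((n \in gNo G2) && (n \notin gN G1))),
      (forall n, n \in gN G ->
          glab G n = if n \in gN G1 then glab G1 n else glab G2 n) &
      (forall n n', n \in gN G -> (n' \in gN G) || (n' \in gNo G) ->
          gedge G n n' =
            if (n \in gN G1) && ((n' \in gN G1) || (n' \in gNo G1))
            then gedge G1 n n'
            else if (n \in gN G2) && ((n' \in gN G2) || (n' \in gNo G2))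
            then gedge G2 n n'
            else 0)].

Definition subgraph G1 G : Prop :=
  exists G2, wf_graph G2 /\ disj_union G G1 G2.

Fixpoint cap_iter G (k : nat) : V -> V -> D :=
  match k with
  | 0 => fun _ _ => 0
  | k.+1 => fun n n' =>
      (if n == n' then 1 else 0) +
      \sum_(n'' <- gN G) gedge G n n'' * cap_iter G k n'' n'
  end.

(* cap(G): the least fixpoint of the capacity equation, i.e. the supremum
   of its Kleene iterates (the least fixpoint of a continuous map on an
   omega-cpo with least element). *)
Definition cap (sup : (nat -> D) -> D) G : V -> V -> D :=
  fun n n' => sup (fun k => cap_iter G k n n').

Definition flow (sup : (nat -> D) -> D) (inf : V -> D) G : V -> D :=
  fun n => \sum_(n' <- gN G) inf n' * cap sup G n' n.

Definition proj (sup : (nat -> D) -> D) (inf : V -> D) G G1 : V -> D :=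
  fun n => inf n +
    \sum_(n' <- gN G | n' \notin gN G1) flow sup inf G n' * gedge G n' n.

End Graphs.

(** The flow [flow(in,G)] is the least solution [f] of the flow equation
    [f n = in n + sum_m f m * eps(m,n)] on [dom(G)]: it is the supremum of
    the Kleene iterates [sum_n' in n' * cap_k(n',n)], and continuity lets the
    supremum pass through the finite sums.  Splitting the sum over [dom(G)]
    into [dom(G1)] and the rest shows that, with [in1 = proj(in,G)(G1)], the
    restriction of [flow(in,G)] solves the flow equation of [G1]; hence it
    dominates [flow(in1,G1)].  Conversely, [flow(in1,G1)] on [dom(G1)] patched
    with [flow(in,G)] elsewhere is a pre-fixpoint of the flow equation of [G],
    so it dominates [flow(in,G)]. *)

From mathcomp Require Import all_boot all_order all_algebra.
From Stdlib Require Import FunctionalExtensionality.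
Set Implicit Arguments. Unset Strict Implicit. Unset Printing Implicit Defensive.
Import GRing.Theory.
Local Open Scope ring_scope.

Section FlowDomain.
Variables (D : pzSemiRingType) (le : D -> D -> Prop) (sup : (nat -> D) -> D).
Hypothesis HD : flow_domain le sup.

Lemma eq_sup (c d : nat -> D) : c =1 d -> sup c = sup d.
Proof. by move=> /functional_extensionality ->. Qed.

Lemma increasing_const x : increasing le (fun _ => x).
Proof. by move=> _; apply: (fd_refl HD). Qed.

Lemma sup_const x : sup (fun _ => x) = x.
Proof.
apply: (fd_antisym HD); last exact: (fd_sup_ub HD (increasing_const x) 0).
by apply: (fd_sup_least HD (increasing_const x)) => _; apply: (fd_refl HD).
Qed.

Lemma sup_succ c : increasing le c -> sup (fun k => c k.+1) = sup c.
Proof.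
move=> c_incr; have cS_incr : increasing le (fun k => c k.+1) by move=> k.
apply: (fd_antisym HD).
  by apply: (fd_sup_least HD cS_incr) => k; apply: (fd_sup_ub HD c_incr).
apply: (fd_sup_least HD c_incr) => k.
exact: (fd_trans HD (c_incr k) (fd_sup_ub HD cS_incr k)).
Qed.

Lemma le_sum (I : eqType) (s : seq I) (P : pred I) (F1 F2 : I -> D) :
  (forall x, x \in s -> P x -> le (F1 x) (F2 x)) ->
  le (\sum_(x <- s | P x) F1 x) (\sum_(x <- s | P x) F2 x).
Proof.
elim: s => [|y s IH] le_F; first by rewrite !big_nil; apply: (fd_refl HD).
have le_s : le (\sum_(x <- s | P x) F1 x) (\sum_(x <- s | P x) F2 x).
  by apply: IH => x xs; apply: le_F; rewrite inE xs orbT.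
rewrite !big_cons.
by case: ifP => // Py; apply: (fd_add_mono HD) => //; apply: le_F; rewrite ?mem_head.
Qed.

Lemma increasing_sum (I : eqType) (s : seq I) (c : I -> nat -> D) :
  (forall x, x \in s -> increasing le (c x)) ->
  increasing le (fun k => \sum_(x <- s) c x k).
Proof. by move=> c_incr k; apply: le_sum => x xs _; apply: c_incr. Qed.

Lemma sup_sum (I : eqType) (s : seq I) (c : I -> nat -> D) :
  (forall x, x \in s -> increasing le (c x)) ->
  sup (fun k => \sum_(x <- s) c x k) = \sum_(x <- s) sup (c x).
Proof.
elim: s => [|y s IH] c_incr.
  by rewrite big_nil -[RHS](sup_const 0); apply: eq_sup => k; rewrite big_nil.
have s_incr x : x \in s -> increasing le (c x).
  by move=> xs; apply: c_incr; rewrite inE xs orbT.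
have y_incr := c_incr y (mem_head y s).
rewrite big_cons -IH // -(fd_add_cont HD y_incr (increasing_sum s_incr)).
by apply: eq_sup => k; rewrite big_cons.
Qed.

Lemma sup_mull x c : increasing le c -> sup (fun k => x * c k) = x * sup c.
Proof.
by move=> c_incr; have := fd_mul_cont HD (increasing_const x) c_incr; rewrite sup_const.
Qed.

Lemma sup_mulr x c : increasing le c -> sup (fun k => c k * x) = sup c * x.
Proof.
by move=> c_incr; have := fd_mul_cont HD c_incr (increasing_const x); rewrite sup_const.
Qed.

End FlowDomain.

Section SumDelta.
Variables (D : pzSemiRingType) (V : eqType) (s : seq V).
Hypothesis s_uniq : uniq s.

Lemma sum_mul_deltar (F : V -> D) b : b \in s ->
  \sum_(m <- s) F m * (if m == b then 1 else 0) = F b.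
Proof.
move=> bs; rewrite (bigD1_seq b) //= eqxx mulr1 big1 ?addr0 // => m /negbTE ->.
by rewrite mulr0.
Qed.

Lemma sum_mul_deltal (F : V -> D) a : a \in s ->
  \sum_(m <- s) (if a == m then 1 else 0) * F m = F a.
Proof.
move=> as_; rewrite (bigD1_seq a) //= eqxx mul1r big1 ?addr0 // => m ma.
by rewrite eq_sym (negbTE ma) mul0r.
Qed.

End SumDelta.

Section FlowEquation.
Variables (D : pzSemiRingType) (le : D -> D -> Prop) (sup : (nat -> D) -> D).
Hypothesis HD : flow_domain le sup.
Variables (V : eqType) (A : Type) (G : graph V A D).
Hypothesis G_uniq : uniq (gN G).
Implicit Types (i u : V -> D).

Definition flow_iter i k n := \sum_(n' <- gN G) i n' * cap_iter G k n' n.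

Lemma cap_iterS k a b : cap_iter G k.+1 a b =
  (if a == b then 1 else 0) + \sum_(m <- gN G) gedge G a m * cap_iter G k m b.
Proof. by []. Qed.

Lemma cap_iter_increasing a b : increasing le (fun k => cap_iter G k a b).
Proof.
move=> k; elim: k a b => [|k IH] a b; first exact: (fd_zero_least HD).
rewrite [cap_iter G k.+2 a b]cap_iterS cap_iterS.
apply: (fd_add_mono HD); first exact: (fd_refl HD).
by apply: (le_sum HD) => m _ _; apply: (fd_mul_mono HD) => //; apply: (fd_refl HD).
Qed.

Lemma flow_iter_increasing i n : increasing le (fun k => flow_iter i k n).
Proof.
move=> k; apply: (le_sum HD) => m _ _.
exact: (fd_mul_mono HD (fd_refl HD _) (cap_iter_increasing _ _ _)).
Qed.

Lemma flow_iter0 i n : flow_iter i 0 n = 0.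
Proof. by rewrite /flow_iter big1 // => m _; rewrite mulr0. Qed.

Lemma flowE i n : flow sup i G n = sup (fun k => flow_iter i k n).
Proof.
have term_incr m : m \in gN G -> increasing le (fun k => i m * cap_iter G k m n).
  by move=> _ k; apply: (fd_mul_mono HD (fd_refl HD _) (cap_iter_increasing _ _ _)).
rewrite /flow_iter (sup_sum HD term_incr); apply: eq_bigr => m _.
by rewrite (sup_mull HD) //; apply: cap_iter_increasing.
Qed.

(* The defining recursion of [cap_iter] expands paths at their first edge;
   this is the expansion at their last edge. *)
Lemma cap_iter_succr k a b : a \in gN G -> b \in gN G ->
  cap_iter G k.+1 a b =
    (if a == b then 1 else 0) + \sum_(m <- gN G) cap_iter G k a m * gedge G m b.
Proof.
elim: k a b => [|k IH] a b aG bG.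
  by rewrite /= !big1 // => m _; rewrite ?mulr0 ?mul0r.
rewrite cap_iterS big_seq; under eq_bigr => m mG do rewrite IH //; rewrite -big_seq.
under eq_bigr do rewrite mulrDr mulr_sumr.
rewrite big_split /= sum_mul_deltar //.
under [X in _ = _ + X]eq_bigr do rewrite mulrDl mulr_suml.
rewrite big_split /= sum_mul_deltal // exchange_big /=.
by congr (_ + (_ + _)); apply: eq_bigr => p _; apply: eq_bigr => m _; rewrite mulrA.
Qed.

Lemma flow_iter_succ i k n : n \in gN G ->
  flow_iter i k.+1 n = i n + \sum_(m <- gN G) flow_iter i k m * gedge G m n.
Proof.
move=> nG; rewrite /flow_iter big_seq.
under eq_bigr => m mG do rewrite cap_iter_succr //; rewrite -big_seq.
under eq_bigr do rewrite mulrDr mulr_sumr.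
rewrite big_split /= sum_mul_deltar //; congr (_ + _).
rewrite exchange_big /=; apply: eq_bigr => m _; rewrite mulr_suml.
by apply: eq_bigr => p _; rewrite mulrA.
Qed.

Lemma flow_fixpoint i n : n \in gN G ->
  flow sup i G n = i n + \sum_(m <- gN G) flow sup i G m * gedge G m n.
Proof.
move=> nG; rewrite flowE -(sup_succ HD (flow_iter_increasing i n)).
have term_incr m : m \in gN G ->
    increasing le (fun k => flow_iter i k m * gedge G m n).
  by move=> _ k; apply: (fd_mul_mono HD (flow_iter_increasing _ _ _) (fd_refl HD _)).
rewrite (eq_sup sup (fun k => flow_iter_succ i k nG)).
rewrite (fd_add_cont HD (increasing_const HD _) (increasing_sum HD term_incr)).
rewrite (sup_const HD) (sup_sum HD term_incr); congr (_ + _); apply: eq_bigr => m _.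
by rewrite (sup_mulr HD) ?flowE //; apply: flow_iter_increasing.
Qed.

Lemma flow_least i u :
  (forall n, n \in gN G -> le (i n + \sum_(m <- gN G) u m * gedge G m n) (u n)) ->
  forall n, n \in gN G -> le (flow sup i G n) (u n).
Proof.
move=> u_pre.
have iter_le k n : n \in gN G -> le (flow_iter i k n) (u n).
  elim: k n => [|k IH] n nG; first by rewrite flow_iter0; apply: (fd_zero_least HD).
  rewrite flow_iter_succ //; apply: (fd_trans HD _ (u_pre n nG)).
  apply: (fd_add_mono HD (fd_refl HD _)); apply: (le_sum HD) => m mG _.
  exact: (fd_mul_mono HD (IH m mG) (fd_refl HD _)).
move=> n nG; rewrite flowE.
by apply: (fd_sup_least HD (flow_iter_increasing i n)) => k; apply: iter_le.
Qed.

End FlowEquation.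

Section Subgraph.
Variables (D : pzSemiRingType) (le : D -> D -> Prop) (sup : (nat -> D) -> D).
Hypothesis HD : flow_domain le sup.
Variables (V : eqType) (A : Type) (G G1 G2 : graph V A D) (inf in1 : V -> D).
Hypotheses (G_uniq : uniq (gN G)) (G1_uniq : uniq (gN G1)).
Hypothesis G_union : disj_union G G1 G2.
Hypothesis in1_proj : forall n, n \in gN G1 -> in1 n = proj sup inf G G1 n.

Lemma mem_subgraph n : n \in gN G1 -> n \in gN G.
Proof. by case: G_union => _ -> _ _ _ nG1; rewrite nG1. Qed.

Lemma sum_in_subgraph (F : V -> D) n : n \in gN G1 ->
  \sum_(m <- gN G) F m * gedge G m n =
  \sum_(m <- gN G1) F m * gedge G1 m n +
  \sum_(m <- gN G | m \notin gN G1) F m * gedge G m n.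
Proof.
move=> nG1; rewrite (bigID (mem (gN G1))) /=; congr (_ + _).
have G1_filter : perm_eq [seq m <- gN G | m \in gN G1] (gN G1).
  apply: uniq_perm; rewrite ?filter_uniq // => m.
  by rewrite mem_filter andb_idr //; apply: mem_subgraph.
rewrite -big_filter (perm_big _ G1_filter) big_seq [RHS]big_seq.
apply: eq_bigr => m mG1; congr (_ * _); case: G_union => _ _ _ _ ->.
- by rewrite mG1 nG1.
- exact: mem_subgraph.
- by rewrite mem_subgraph.
Qed.

Lemma flow_proj_fixpoint n : n \in gN G1 ->
  flow sup inf G n = in1 n + \sum_(m <- gN G1) flow sup inf G m * gedge G1 m n.
Proof.
move=> nG1; rewrite (flow_fixpoint HD) ?mem_subgraph // sum_in_subgraph //.
by rewrite in1_proj // /proj addrAC addrA.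
Qed.

Lemma flow_subgraph_le n : n \in gN G1 -> le (flow sup in1 G1 n) (flow sup inf G n).
Proof.
apply: (flow_least HD) => // m mG1.
by rewrite -flow_proj_fixpoint //; apply: (fd_refl HD).
Qed.

Lemma flow_le_subgraph n : n \in gN G1 -> le (flow sup inf G n) (flow sup in1 G1 n).
Proof.
pose u m := if m \in gN G1 then flow sup in1 G1 m else flow sup inf G m.
suff u_pre m : m \in gN G -> le (inf m + \sum_(p <- gN G) u p * gedge G p m) (u m).
  move=> nG1; have := flow_least HD G_uniq u_pre (mem_subgraph nG1).
  by rewrite /u nG1.
move=> mG; rewrite /u; case: ifP => mG1.
  rewrite sum_in_subgraph // (flow_fixpoint HD G1_uniq) // in1_proj // /proj.
  under eq_big_seq => p pG1 do rewrite pG1.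
  under [X in le (_ + (_ + X)) _]eq_bigr => p /negbTE pG1 do rewrite pG1.
  by rewrite addrA addrAC; apply: (fd_refl HD).
rewrite (flow_fixpoint HD G_uniq _ mG); apply: (fd_add_mono HD (fd_refl HD _)).
apply: (le_sum HD) => p pG _; apply: (fd_mul_mono HD _ (fd_refl HD _)).
by case: ifP => pG1; [apply: flow_subgraph_le | apply: (fd_refl HD)].
Qed.

End Subgraph.

Theorem mainTheorem3 (D : pzSemiRingType) (le : D -> D -> Prop)
    (sup : (nat -> D) -> D) (HD : flow_domain le sup)
    (V : eqType) (A : Type) (G G1 : graph V A D) (inf in1 : V -> D) :
  wf_graph G -> wf_graph G1 -> subgraph G1 G ->
  (forall n, n \in gN G1 -> in1 n = proj sup inf G G1 n) ->
  forall n, n \in gN G1 -> flow sup inf G n = flow sup in1 G1 n.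
Proof.
move=> [G_uniq _ _] [G1_uniq _ _] [G2 [_ G_union]] in1_proj n nG1.
apply: (fd_antisym HD).
- exact: (flow_le_subgraph HD G_uniq G1_uniq G_union in1_proj).
- exact: (flow_subgraph_le HD G_uniq G1_uniq G_union in1_proj).
Qed.
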